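(* If an upper-embeddable cubic graph $G$ contains a loop, then $G$ is tightly two-face-embeddable.
   Context: Graphs are finite; loops and multiple edges are allowed; a cubic graph is $3$-regular. For a connected graph $H$, $\beta(H)=|E(H)|-|V(H)|+1$. A connected graph is upper-embeddable if it has a cellular embedding (all faces open discs) into a closed orientable surface with at most two faces; a cubic upper-embeddable graph with $\beta$ odd is called two-face-embeddable (it has such an embedding with exactly two faces). In an upper-embeddable cubic graph $G$, a pair $\{x,y\}$ of distinct vertices is removable if $x$ and $y$ are joined by exactly one edge, this edge $xy$ is not a bridge, and $G-\{x,y\}$ is (connected and) upper-embeddable. $G$ is amply upper-embeddable if it is upper-embeddable and has a removable pair; it is tightly upper-embeddable if it is upper-embeddable but not amply upper-embeddable. A two-face-embeddable cubic graph is tightly two-face-embeddable if it is not amply upper-embeddable. *)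

(* Graphs with loops and multiple edges as dart structures;
   orientable cellular embeddings as rotation systems (Heffter-Edmonds). *)
From mathcomp Require Import all_boot fingroup perm.
Set Implicit Arguments. Unset Strict Implicit. Unset Printing Implicit Defensive.

(* A finite multigraph (loops and multiple edges allowed): every edge is a pair
   of darts {d, dinv d}; dv d is the vertex at which dart d is attached. *)
Record mgraph := MGraph {
  vtx : finType;
  dart : finType;
  dv : dart -> vtx;
  dinv : dart -> dart;
  dinvK : involutive dinv;
  dinv_neq : forall d, dinv d != d }.

Section Defs.
Variable G : mgraph.

Definition darts_in (S : {set vtx G}) : {set dart G} :=
  [set d | (dv d \in S) && (dv (dinv d) \in S)].

Definition adjE (Ds : {set dart G}) : rel (vtx G) :=
  fun x y => [exists d in Ds, (dv d == x) && (dv (dinv d) == y)].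

Definition connectedS (S : {set vtx G}) : bool :=
  (S != set0) &&
  [forall x in S, [forall y in S, connect (adjE (darts_in S)) x y]].

Definition ncomp (Ds : {set dart G}) : nat := n_comp (adjE Ds) predT.

Definition is_bridge (d : dart G) : bool :=
  (ncomp [set: dart G] < ncomp ([set: dart G] :\ d :\ dinv d))%N.

Definition rotation (S : {set vtx G}) (s : {perm dart G}) : Prop :=
  (forall d, d \in darts_in S -> (s d \in darts_in S) /\ dv (s d) = dv d) /\
  (forall d d', d \in darts_in S -> d' \in darts_in S -> dv d = dv d' ->
     fconnect s d d').

Definition faces (S : {set vtx G}) (s : {perm dart G}) : nat :=
  fcard (fun d => s (dinv d)) (mem (darts_in S)).

Definition upper_embeddable (S : {set vtx G}) : Prop :=
  connectedS S /\ exists s : {perm dart G}, rotation S s /\ (faces S s <= 2)%N.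

Definition cubic : Prop := forall v : vtx G, #|[set d | dv d == v]| = 3.

(* Betti number |E| - |V| + 1 of the induced subgraph on S (exact when connected) *)
Definition beta (S : {set vtx G}) : nat := (#|darts_in S| %/ 2).+1 - #|S|.

Definition has_loop : Prop := exists d : dart G, dv (dinv d) = dv d.

Definition two_face_embeddable : Prop :=
  cubic /\ upper_embeddable setT /\ odd (beta setT).

Definition removable (x y : vtx G) : Prop :=
  [/\ x != y,
      #|[set d | (dv d == x) && (dv (dinv d) == y)]| = 1,
      (forall d, dv d = x -> dv (dinv d) = y -> ~~ is_bridge d) &
      upper_embeddable (~: [set x; y])].

Definition amply_upper_embeddable : Prop :=
  upper_embeddable setT /\ exists x y, removable x y.

Definition tightly_two_face_embeddable : Prop :=
  two_face_embeddable /\ ~ amply_upper_embeddable.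

End Defs.

From mathcomp Require Import all_boot fingroup perm morphism action zify.
Set Implicit Arguments. Unset Strict Implicit. Unset Printing Implicit Defensive.

(* The face permutation d |-> s (dinv d) of a rotation system s is the product
   of the dart involution and the rotation.  Restricting all three to the darts
   in play and comparing signatures gives  #faces = |E| + |V|  (mod 2).
   At a cubic vertex carrying a loop, the rotation cycles the two darts of the
   loop and one more dart, so it sends one loop dart to the other: the loop
   bounds a face of length one, and there are at least two faces.  Hence an
   upper-embeddable cubic graph with a loop has exactly two faces and
   |E| + |V| even, i.e. beta is odd.  If {x, y} were removable, neither x nor
   y carries a loop (the edge xy would then be a bridge), so the loop survives
   in G - {x, y}, which has 5 edges and 2 vertices fewer; the same argument
   makes |E| + |V| even there too, a parity contradiction. *)

Section FunctionOrbits.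
Variable T : finType.
Implicit Types (f g : T -> T) (D P : {set T}).

Lemma fconnect_iterP f x y :
  reflect (exists n, iter n f x = y) (fconnect f x y).
Proof.
apply: (iffP idP) => [/iter_findex|[n <-]]; last exact: fconnect_iter.
by exists (findex f x y).
Qed.

Lemma iter_homo f P n : {homo f : x / x \in P} -> {homo iter n f : x / x \in P}.
Proof. by move=> fP x xP; elim: n => //= n; apply: fP. Qed.

Lemma n_comp_kernel (K : finType) (e : rel T) D (k : T -> K) :
  connect_sym e -> closed e D ->
  {in D &, forall x y, connect e x y = (k x == k y)} ->
  n_comp e D = #|k @: D|.
Proof.
move=> sym clD ek.
have -> : k @: D = k @: [set x in D | roots e x].
  apply/setP=> z; apply/imsetP/imsetP => [[x xD ->]|[x]]; last first.
    by rewrite inE => /andP[xD _] ->; exists x.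
  have rD : root e x \in D by rewrite -(closed_connect clD (connect_root e x)).
  exists (root e x); first by rewrite inE roots_root // rD.
  by apply/eqP; rewrite -ek //; exact: connect_root.
rewrite card_in_imset; first by apply: eq_card => x; rewrite !inE andbC.
move=> x y; rewrite !inE => /andP[xD rx] /andP[yD ry] /eqP.
by rewrite -ek // => /(rootP sym); rewrite (eqP rx) (eqP ry).
Qed.

Lemma n_comp_lt_subrel (e e' : rel T) x y :
  connect_sym e -> connect_sym e' -> subrel e' e ->
  connect e x y -> ~~ connect e' x y -> n_comp e predT < n_comp e' predT.
Proof.
move=> se se' sub cxy ncxy.
have rootsE (r : rel T) : n_comp r predT = #|[set z | roots r z]|.
  by apply: eq_card => z; rewrite !inE andbT.
rewrite !rootsE.
have sub' : subrel (connect e') (connect e).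
  by apply: connect_sub => u v /sub; apply: connect1.
have rr z : root e (root e' z) = root e z.
  by apply/esym/(rootP se); apply: sub'; exact: connect_root.
apply: (@leq_ltn_trans #|root e @: [set z | roots e' z]|).
  apply: subset_leq_card; apply/subsetP => z; rewrite inE => /eqP rz.
  by apply/imsetP; exists (root e' z); rewrite ?inE ?roots_root // rr rz.
rewrite ltn_neqAle leq_imset_card andbT; apply/negP => /imset_injP inj.
move: ncxy; rewrite -(root_connect se') => /eqP; apply.
by apply: inj; rewrite ?inE ?roots_root // !rr; exact/(rootP se).
Qed.

Lemma fcard_eq_in f g D :
  {in D, f =1 g} -> {homo f : x / x \in D} -> fcard f D = fcard g D.
Proof.
move=> fg fD; have iterE n x : x \in D -> iter n f x = iter n g x.
  by move=> xD; elim: n => //= n <-; rewrite fg // iter_homo.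
have fgE x : x \in D -> fconnect f x =1 fconnect g x.
  by move=> xD y; apply/fconnect_iterP/fconnect_iterP => -[n <-]; exists n;
    rewrite iterE.
apply: eq_card => x; rewrite !inE.
have [xD|] := boolP (x \in D); rewrite ?andbF ?andbT //.
by rewrite /roots /root (eq_pick (fgE x xD)).
Qed.

Lemma homo_inj_mem f D :
  injective f -> {homo f : x / x \in D} -> forall x, (f x \in D) = (x \in D).
Proof.
move=> injf fD x; apply/idP/idP => [|/fD//].
have imD : f @: D = D.
  apply/eqP; rewrite eqEcard card_imset // leqnn andbT.
  by apply/subsetP => _ /imsetP[y yD ->]; exact: fD.
by rewrite -{1}imD => /imsetP[y yD /injf ->].
Qed.

Lemma fclosed_inj f D : injective f -> {homo f : x / x \in D} -> fclosed f D.
Proof. by move=> injf fD x y /= /eqP <-; rewrite homo_inj_mem. Qed.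

End FunctionOrbits.

Section PermutationOrbits.
Variable T : finType.
Implicit Types (p q : {perm T}) (D : {set T}).

Lemma fconnect_porbit p x y : fconnect p x y = (y \in porbit p x).
Proof.
apply/fconnect_iterP/porbitP => -[n E]; exists n; first by rewrite permX E.
by rewrite E permX.
Qed.

Lemma card_porbits p : #|porbits p| = fcard p [set: T].
Proof.
rewrite (@n_comp_kernel _ _ _ _ (porbit p)).
- by apply: eq_card => X; apply/imsetP/imsetP => -[x _ ->]; exists x.
- exact: fconnect_sym (@perm_inj _ p).
- by move=> x y _; rewrite !inE.
by move=> x y _ _; rewrite eq_porbit_mem porbit_sym fconnect_porbit.
Qed.

Lemma card_porbits_on q D :
  perm_on D q -> #|porbits q| = fcard q D + #|~: D|.
Proof.
move=> qD; rewrite card_porbits (eq_n_comp_r (a' := predT)) => [|x]; last first.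
  by rewrite !inE.
rewrite (n_compC D); congr (_ + _).
rewrite (eq_n_comp_r (a' := ~: D)) => [|x]; last by rewrite !inE.
rewrite (@fcard_eq_in _ _ id) ?fcard_id // => [x|x]; rewrite inE => xD.
  exact: out_perm qD xD.
by rewrite inE (perm_closed _ qD).
Qed.

Lemma homo_perm_astabs p D : {homo p : x / x \in D} -> p \in 'N(D | 'P)%g.
Proof.
by move=> pD; apply/astabsP => x /=; exact: homo_inj_mem (@perm_inj _ p) pD x.
Qed.

Lemma odd_restr_perm p D :
  p \in 'N(D | 'P)%g -> odd_perm (restr_perm D p) = odd (#|D| + fcard p D).
Proof.
move=> nDp; have pD x : (p x \in D) = (x \in D) := astabs_act x nDp.
rewrite /odd_perm (card_porbits_on (restr_perm_on D p)).
rewrite (@fcard_eq_in _ _ p) => [|x xD|x xD]; last 2 first.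
- exact: restr_permE.
- by rewrite restr_permE // pD.
rewrite -(cardsC D) !oddD.
by case: (odd #|D|); case: (odd (fcard p D)); case: (odd #|~: D|).
Qed.

Lemma adjacent_in_cycle3 p a b c :
  {homo p : x / x \in [set a; b; c]} -> a != b -> fconnect p a b ->
  p a = b \/ p b = a.
Proof.
move=> pX nab ab.
have [|pab] := eqVneq (p a) b; first by left.
have [|pba] := eqVneq (p b) a; first by right.
have [P [Pp aP bP]] : exists P : {set T},
    [/\ {homo p : x / x \in P}, a \in P & b \notin P]; last first.
  by move: ab bP => /fconnect_iterP[n <-]; rewrite (iter_homo _ Pp aP).
have := pX a; rewrite !inE eqxx (negPf pab) orbF => /(_ isT) /orP[/eqP pa|/eqP pa].
  exists [set a]; split; rewrite ?inE 1?eq_sym //.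
  by move=> x; rewrite inE => /eqP->; rewrite pa inE.
have nbc : b != c by apply: contraNneq pab => ->; rewrite pa.
have pcX : p c \in [set a; b; c] by apply: pX; rewrite !inE eqxx !orbT.
have [pcb|pcb] := eqVneq (p c) b.
  have := pX b; rewrite !inE eqxx orbT (negPf pba) /= => /(_ isT).
  case/orP => /eqP pb.
    by rewrite (perm_inj (etrans pb (esym pcb))) eqxx in nbc.
  by rewrite (perm_inj (etrans pb (esym pa))) eqxx in nab.
exists [set a; c]; split; last by rewrite !inE negb_or eq_sym nab.
- move=> x; rewrite !inE => /orP[]/eqP->; rewrite ?pa ?eqxx ?orbT //.
  by move: pcX; rewrite !inE (negPf pcb) orbF.
- by rewrite !inE eqxx.
Qed.

End PermutationOrbits.

Section Embeddings.
Variable G : mgraph.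
Implicit Types (S : {set vtx G}) (s : {perm dart G}) (d : dart G).

Lemma dinv_inj : injective (@dinv G).
Proof. exact: inv_inj (@dinvK G). Qed.

Lemma darts_in_dinv S d : (dinv d \in darts_in S) = (d \in darts_in S).
Proof. by rewrite !inE dinvK andbC. Qed.

Definition dinv_perm : {perm dart G} := perm dinv_inj.

Lemma fcard_dinv S : fcard (@dinv G) (darts_in S) * 2 = #|darts_in S|.
Proof.
apply: fcard_order_set; first exact: dinv_inj; last first.
  by apply: fclosed_inj dinv_inj _ => d; rewrite darts_in_dinv.
apply/subsetP => d _; rewrite inE; apply/eqP.
have cyc : fcycle (@dinv G) [:: d; dinv d] by rewrite /= dinvK !eqxx.
have uniq_d : uniq [:: d; dinv d] by rewrite /= inE eq_sym dinv_neq.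
by rewrite (order_cycle cyc uniq_d) ?mem_head.
Qed.

Lemma rotation_homo S s : rotation S s -> {homo s : d / d \in darts_in S}.
Proof. by case=> rot _ d /rot[]. Qed.

Lemma fcard_rotation S s :
  rotation S s -> fcard s (darts_in S) = #|@dv G @: darts_in S|.
Proof.
move=> rot; have sD := rotation_homo rot; have [rot_dv rot_cycle] := rot.
apply: n_comp_kernel; first exact: fconnect_sym (@perm_inj _ s).
  exact: fclosed_inj (@perm_inj _ s) sD.
move=> d d' dD d'D; apply/idP/eqP => [/fconnect_iterP[n <-]|]; last first.
  exact: rot_cycle.
by elim: n => //= n ->; case: (rot_dv _ (iter_homo n sD dD)) => _ ->.
Qed.

Lemma faces_parity S s : rotation S s ->
  odd (faces S s) = odd (#|darts_in S| %/ 2 + #|@dv G @: darts_in S|).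
Proof.
move=> rot; set D := darts_in S.
have nDi : dinv_perm \in 'N(D | 'P)%g.
  by apply: homo_perm_astabs => d; rewrite permE darts_in_dinv.
have nDs : s \in 'N(D | 'P)%g by apply/homo_perm_astabs/rotation_homo.
have facesE : faces S s = fcard (dinv_perm * s)%g D.
  by apply: eq_fcard => d; rewrite permM permE.
have dinvE : fcard dinv_perm D = #|D| %/ 2.
  by rewrite -(fcard_dinv S) mulnK //; apply: eq_fcard => d; rewrite permE.
have := odd_permM (restr_perm D dinv_perm) (restr_perm D s).
rewrite -morphM //= !odd_restr_perm ?groupM // -facesE dinvE fcard_rotation // -/D.
set k := #|D| %/ 2; have -> : #|D| = k.*2 by rewrite -muln2 /k -(fcard_dinv S) mulnK.
by rewrite !oddD odd_double.
Qed.

Lemma cubic_third_dart (D : {set dart G}) v d1 d2 : cubic G ->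
  d1 \in D -> d2 \in D -> dv d1 = v -> dv d2 = v -> d1 != d2 ->
  exists e, [/\ e \in D, dv e = v &
    forall d, d \in D -> dv d = v -> d \in [set d1; d2; e]].
Proof.
move=> cub d1D d2D d1v d2v n12.
set X := [set d in D | dv d == v] :\: [set d1; d2].
have cardX : #|X| <= 1.
  have : #|[set d in D | dv d == v]| <= 3.
    by rewrite -(cub v); apply/subset_leq_card/subsetP => d; rewrite !inE => /andP[].
  rewrite (cardsD1 d1) (cardsD1 d2) !inE d1D d2D d1v d2v eq_sym n12 !eqxx /=.
  by rewrite setDDl.
have dX d : d \in D -> dv d = v -> d \notin [set d1; d2] -> d \in X.
  by move=> dD dv_d dn; rewrite inE dn !inE dD dv_d eqxx.
suff [e [eD ev eX]] : exists e, [/\ e \in D, dv e = v & forall d, d \in X -> d = e].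
  exists e; split => // d dD dv_d.
  have [|/(dX _ dD dv_d)/eX ->] := boolP (d \in [set d1; d2]).
    by rewrite !inE => /orP[]->; rewrite ?orbT.
  by rewrite !inE eqxx !orbT.
have [X0|[e eX]] := set_0Vmem X; first by exists d1; split => // d; rewrite X0 inE.
exists e; split; try by move: eX; rewrite !inE => /andP[_ /andP[? /eqP]].
by move=> d dX'; move: cardX => /card_le1_eqP /(_ d e dX' eX).
Qed.

Lemma faces_gt1_fixpoint S s b : rotation S s ->
  b \in darts_in S -> s (dinv b) = b -> 1 < faces S s.
Proof.
move=> rot bD sb; set f := fun d => s (dinv d).
have fD : {homo f : d / d \in darts_in S}.
  by move=> d dD; apply: (rotation_homo rot); rewrite darts_in_dinv.
have f_inj : injective f by move=> d d' /perm_inj /dinv_inj.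
apply/(fcard_gt1P f_inj (fclosed_inj f_inj fD)).
exists b => //; exists (dinv b); first by rewrite darts_in_dinv.
apply/negP => /fconnect_iterP[n]; apply/eqP.
have : iter n f b \in [set b].
  by apply: iter_homo; rewrite ?inE // => d /set1P->; rewrite /f sb inE.
by rewrite inE => /eqP->; rewrite eq_sym dinv_neq.
Qed.

Lemma faces_loop_gt1 S s a : cubic G -> rotation S s ->
  a \in darts_in S -> dv (dinv a) = dv a -> 1 < faces S s.
Proof.
move=> cub rot aD loop_a; have [rot_dv rot_cycle] := rot.
have a'D : dinv a \in darts_in S by rewrite darts_in_dinv.
have naa' : a != dinv a by rewrite eq_sym dinv_neq.
have [e [eD ev atv]] := cubic_third_dart cub aD a'D erefl loop_a naa'.
have sX : {homo s : d / d \in [set a; dinv a; e]}.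
  move=> d dX; have [dD dv_d] : d \in darts_in S /\ dv d = dv a.
    by case/setUP: dX => [/set2P[]|/set1P]->.
  by have [sdD sdv] := rot_dv d dD; apply: atv; rewrite ?sdv.
have [sa|sa'] := adjacent_in_cycle3 sX naa' (rot_cycle _ _ aD a'D (esym loop_a)).
- by apply: (faces_gt1_fixpoint rot a'D); rewrite dinvK.
- exact: faces_gt1_fixpoint rot aD sa'.
Qed.

Lemma adjE_sym (Ds : {set dart G}) :
  {homo @dinv G : d / d \in Ds} -> symmetric (adjE Ds).
Proof.
move=> Ds_dinv x y; apply/existsP/existsP => -[d /andP[dDs /andP[/eqP dx /eqP dy]]];
  by exists (dinv d); rewrite Ds_dinv // dinvK dx dy !eqxx.
Qed.

Lemma is_bridge_dinv d : is_bridge (dinv d) = is_bridge d.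
Proof. by rewrite /is_bridge dinvK setDDl setUC -setDDl. Qed.

Lemma is_bridge_only_loops d :
  (forall d', d' != d -> d' != dinv d -> dv d' = dv d -> dv (dinv d') = dv d) ->
  dv (dinv d) != dv d -> is_bridge d.
Proof.
move=> only_loops nloop; set Ds := [set: dart G] :\ d :\ dinv d.
have symDs : connect_sym (adjE Ds).
  apply/sym_connect_sym/adjE_sym => d'; rewrite !inE (inj_eq dinv_inj).
  by rewrite (can2_eq (@dinvK G) (@dinvK G) d' d) => /and3P[-> ->].
apply: (n_comp_lt_subrel (e' := adjE Ds) (x := dv d) (y := dv (dinv d))).
- by apply/sym_connect_sym/adjE_sym => d'; rewrite !inE.
- exact: symDs.
- move=> u v /existsP[d' /andP[_ uv]]; apply/existsP; exists d'; by rewrite inE.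
- by apply: connect1; apply/existsP; exists d; rewrite inE !eqxx.
apply/negP => cut.
have cl : closed (adjE Ds) (pred1 (dv d)).
  apply: (intro_closed symDs) => u v /existsP[d' /andP[d'Ds /andP[/eqP <- /eqP <-]]].
  move: d'Ds; rewrite !inE => /andP[nd' /andP[nd _]] /eqP d'x.
  by rewrite /= only_loops.
by move: (closed_connect cl cut); rewrite !inE eqxx (negPf nloop).
Qed.

Lemma is_bridge_loop_vertex b d : cubic G ->
  dv b = dv d -> dv (dinv b) = dv d -> dv (dinv d) != dv d -> is_bridge d.
Proof.
move=> cub bx b'x nloop; have nbb : b != dinv b by rewrite eq_sym dinv_neq.
have [e [_ _ atx]] := cubic_third_dart cub (in_setT b) (in_setT (dinv b)) bx b'x nbb.
have de : d = e.
  case/setUP: (atx d (in_setT d) erefl) => [/set2P[] db|/set1P //].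
    by rewrite db b'x bx eqxx in nloop.
  by rewrite db dinvK bx b'x eqxx in nloop.
apply: is_bridge_only_loops nloop => d' nd' _ d'x.
case/setUP: (atx d' (in_setT d') d'x) => [/set2P[]->|/set1P d'e] //.
  by rewrite dinvK.
by rewrite d'e -de eqxx in nd'.
Qed.

Lemma imset_dv_darts_in S a :
  connectedS S -> a \in darts_in S -> @dv G @: darts_in S = S.
Proof.
move=> /andP[_ conS] aS; have aS' : dv a \in S by move: aS; rewrite inE => /andP[].
apply/setP => w; apply/imsetP/idP => [[d dS ->]|wS].
  by move: dS; rewrite inE => /andP[].
have [->|nwa] := eqVneq w (dv a); first by exists a.
move: conS => /forall_inP/(_ w wS)/forall_inP/(_ _ aS')/connectP[[|z p] pth E].
  by rewrite E eqxx in nwa.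
by case/andP: pth => /existsP[d /andP[dS /andP[/eqP <- _]]] _; exists d.
Qed.

Lemma card_darts : cubic G -> #|dart G| = 3 * #|vtx G|.
Proof.
move=> cub; rewrite -sum1_card (partition_big (@dv G) predT) //=.
rewrite (eq_bigr (fun _ => 3)) => [|v _]; first by rewrite sum_nat_const cardT mulnC.
by rewrite -(cub v) sum1dep_card; apply: eq_card => d; rewrite !inE.
Qed.

Lemma unique_dart_between x y :
  #|[set d | (dv d == x) && (dv (dinv d) == y)]| = 1 ->
  exists d0, [/\ dv d0 = x, dv (dinv d0) = y &
    forall d, dv d = x -> dv (dinv d) = y -> d = d0].
Proof.
move=> /eqP/cards1P[d0 xyE]; exists d0; split.
- by move: (set11 d0); rewrite -xyE inE => /andP[/eqP->].
- by move: (set11 d0); rewrite -xyE inE => /andP[_ /eqP->].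
by move=> d dx dy; apply/set1P; rewrite -xyE inE dx dy !eqxx.
Qed.

Lemma card_darts_in_setC2 x y : cubic G -> x != y ->
  #|[set d | (dv d == x) && (dv (dinv d) == y)]| = 1 ->
  (forall d, dv (dinv d) = dv d -> dv d \notin [set x; y]) ->
  #|darts_in (~: [set x; y])| + 10 = #|dart G|.
Proof.
move=> cub nxy /unique_dart_between[d0 [d0x d0y xy_d0]] loopless.
set A := [set d | dv d \in [set x; y]].
have cardA : #|A| = 6.
  have -> : A = [set d | dv d == x] :|: [set d | dv d == y].
    by apply/setP => d; rewrite !inE.
  rewrite cardsU !cub (_ : _ :&: _ = set0) ?cards0 //.
  by apply/setP => d; rewrite !inE; case: eqP => // ->; exact: negPf.
set B := @dinv G @^-1: A.
have cardB : #|B| = 6 by rewrite card_preimset //; exact: dinv_inj.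
have AB : A :&: B = [set d0; dinv d0].
  apply/setP => d; rewrite !inE; apply/idP/idP; last first.
    by case/orP => /eqP->; rewrite ?dinvK d0x d0y !eqxx ?orbT.
  case/andP => /orP[]/eqP dv_d /orP[]/eqP dv_d'.
  - by move: (loopless d); rewrite dv_d dv_d' !inE eqxx ?orbT => /(_ erefl).
  - by rewrite (xy_d0 d) ?eqxx.
  - by rewrite -(xy_d0 (dinv d)) ?dinvK ?eqxx ?orbT.
  - by move: (loopless d); rewrite dv_d dv_d' !inE eqxx ?orbT => /(_ erefl).
have : #|A :|: B| = 10.
  by have := cardsUI A (B); rewrite AB cards2 eq_sym dinv_neq cardA cardB; lia.
have -> : darts_in (~: [set x; y]) = ~: (A :|: B).
  by apply/setP => d; rewrite !inE !negb_or.
by move=> <-; rewrite addnC cardsC.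
Qed.

Lemma upper_embeddable_loop_even S a : cubic G -> upper_embeddable S ->
  a \in darts_in S -> dv (dinv a) = dv a -> ~~ odd (#|darts_in S| %/ 2 + #|S|).
Proof.
move=> cub [conS [s [rot faces_le2]]] aS loop_a.
have faces2 : faces S s = 2.
  by apply/eqP; rewrite eqn_leq faces_le2 (faces_loop_gt1 cub rot aS loop_a).
by rewrite -{2}(imset_dv_darts_in conS aS) -(faces_parity rot) faces2.
Qed.

Lemma removable_loopless x y : cubic G -> removable x y ->
  forall d, dv (dinv d) = dv d -> dv d \notin [set x; y].
Proof.
move=> cub [nxy /unique_dart_between[d0 [d0x d0y _]] not_bridge _] b loop_b.
apply/set2P => -[bx|b_y]; move/negP: (not_bridge d0 d0x d0y); apply.
  by apply: (is_bridge_loop_vertex (b := b)); rewrite ?loop_b ?d0x ?d0y // eq_sym.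
rewrite -is_bridge_dinv; apply: (is_bridge_loop_vertex (b := b));
  by rewrite ?dinvK ?loop_b ?d0x ?d0y.
Qed.

End Embeddings.

Lemma odd_beta_cubic n : ~~ odd (3 * n %/ 2 + n) -> odd ((3 * n %/ 2).+1 - n).
Proof.
move=> /negbTE even; have := modn2 (3 * n %/ 2 + n); rewrite even.
by have := modn2 ((3 * n %/ 2).+1 - n); case: odd => //=; lia.
Qed.

Lemma removal_flips_parity n m k : m + 10 = 3 * n -> k + 2 = n ->
  ~~ odd (3 * n %/ 2 + n) -> odd (m %/ 2 + k).
Proof.
move=> Em Ek /negbTE even; have := modn2 (3 * n %/ 2 + n); rewrite even.
by have := modn2 (m %/ 2 + k); case: odd => //=; lia.
Qed.

Theorem lemma3 (G : mgraph) :
  cubic G -> upper_embeddable [set: vtx G] -> has_loop G ->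
  tightly_two_face_embeddable G.
Proof.
move=> cub ue [a loop_a].
have card_darts_inT : #|darts_in [set: vtx G]| = 3 * #|vtx G|.
  by rewrite -(card_darts cub); apply: eq_card => d; rewrite !inE.
have aT : a \in darts_in [set: vtx G] by rewrite !inE.
have evenT := upper_embeddable_loop_even cub ue aT loop_a.
rewrite card_darts_inT cardsT in evenT.
split.
  by split; [|split] => //; rewrite /beta card_darts_inT cardsT odd_beta_cubic.
case=> _ [x [y rem]]; have loopless := removable_loopless cub rem.
case: rem => nxy xy1 _ ueS.
have aS : a \in darts_in (~: [set x; y]).
  by rewrite inE loop_a andbb inE loopless.
have := upper_embeddable_loop_even cub ueS aS loop_a; apply/negP/negPn.
apply: removal_flips_parity evenT.
- by rewrite (card_darts_in_setC2 cub nxy xy1 loopless) card_darts.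
- by rewrite -(cardsC [set x; y]) cards2 nxy addnC.
Qed.
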